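(* Let $n,\kappa,d'\ge1$ and $1\le i_0\le d'$. Let $\mathcal{V}_1,\dots,\mathcal{V}_K\in\mathbb{R}^{p_1\times\cdots\times p_{d'}}$, with $p_{i_0}=n^\kappa$, be an orthonormal system (with respect to the Frobenius inner product) of rank-one tensors $\mathcal{V}_k=\mathbf{v}^1_k\circ\cdots\circ\mathbf{v}^{d'}_k$ with $\|\mathbf{v}^i_k\|_2=1$ for all $i,k$. Let $A_{i_0}\in\mathbb{R}^{m\times n^\kappa}$ have the RIP$(\varepsilon/2,\mathcal{S}_{1,2})$ property and assume $\mathbf{v}^{i_0}_k\in\mathcal{S}_1$ for all $k$. Let $\mathcal{L}(\mathcal{X})=\mathcal{X}\times_{i_0}A_{i_0}$. Then $(1-\varepsilon)\|\mathcal{V}_k\|^2\le\|\mathcal{L}\mathcal{V}_k\|^2\le(1+\varepsilon)\|\mathcal{V}_k\|^2$ for all $k$, and $(1-\varepsilon)\|\mathcal{V}_k\pm\mathcal{V}_l\|^2\le\|\mathcal{L}(\mathcal{V}_k\pm\mathcal{V}_l)\|^2\le(1+\varepsilon)\|\mathcal{V}_k\pm\mathcal{V}_l\|^2$ for all $1\le k,l\le K$.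
   Context: $\|\cdot\|$ is the Frobenius norm, $\circ$ the outer product, and $\times_j$ the $j$-mode product $(\mathcal{X}\times_jU)_{i_1,\dots,\ell,\dots,i_D}=\sum_{i_j}\mathcal{X}_{i_1,\dots,i_j,\dots,i_D}U_{\ell,i_j}$. $\mathcal{S}_1=\{\mathbf{u}^1\otimes\cdots\otimes\mathbf{u}^\kappa:\mathbf{u}^i\in\mathbb{S}^{n-1}\}\subset\mathbb{R}^{n^\kappa}$ ($\otimes$ Kronecker product), $\mathcal{S}_2=\{(\mathbf{x}+\mathbf{y})/\|\mathbf{x}+\mathbf{y}\|_2:\mathbf{x},\mathbf{y}\in\mathcal{S}_1,\langle\mathbf{x},\mathbf{y}\rangle=0\}$, $\mathcal{S}_{1,2}=\mathcal{S}_1\cup\mathcal{S}_2$. A matrix $A$ has RIP$(\varepsilon,\mathcal{S})$ if $(1-\varepsilon)\|s\|^2\le\|As\|^2\le(1+\varepsilon)\|s\|^2$ for all $s\in\mathcal{S}$. *)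

From HB Require Import structures.
From mathcomp Require Import all_boot all_order all_algebra.
Set Implicit Arguments. Unset Strict Implicit. Unset Printing Implicit Defensive.
Import Order.TTheory GRing.Theory Num.Theory.
Local Open Scope ring_scope.

Definition vnorm2 (R : rcfType) (N : nat) (v : 'cV[R]_N) : R :=
  \sum_(i < N) v i 0 ^+ 2.

Definition vdot (R : rcfType) (N : nat) (v w : 'cV[R]_N) : R :=
  \sum_(i < N) v i 0 * w i 0.

(* entry j (as a natural number) of v, 0 if out of range *)
Definition vget (R : rcfType) (N : nat) (v : 'cV[R]_N) (j : nat) : R :=
  oapp (fun o : 'I_N => v o 0) 0 (insub j).

(* Kronecker product u^1 (x) ... (x) u^kappa of kappa vectors in R^n
   (0-based index i, u i = u^{i+1}); u^1 is the most significant factor: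
   (u^1 (x) ... (x) u^kappa)_t = prod_i u^i_{digit_i(t)},
   digit_i(t) = (t / n^(kappa-1-i)) mod n. *)
Definition kronv (R : rcfType) (n kappa : nat) (u : 'I_kappa -> 'cV[R]_n)
  : 'cV[R]_(n ^ kappa) :=
  \col_(t < n ^ kappa)
    \prod_(i < kappa) vget (u i) ((t %/ n ^ (kappa - 1 - i)) %% n)%N.

Definition S1 (R : rcfType) (n kappa : nat) (s : 'cV[R]_(n ^ kappa)) : Prop :=
  exists u : 'I_kappa -> 'cV[R]_n,
    (forall i, vnorm2 (u i) = 1) /\ s = kronv u.

Definition S2 (R : rcfType) (n kappa : nat) (s : 'cV[R]_(n ^ kappa)) : Prop :=
  exists x y : 'cV[R]_(n ^ kappa),
    [/\ S1 x, S1 y, vdot x y = 0 &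
        s = (Num.sqrt (vnorm2 (x + y)))^-1 *: (x + y)].

Definition S12 (R : rcfType) (n kappa : nat) (s : 'cV[R]_(n ^ kappa)) : Prop :=
  S1 s \/ S2 s.

Definition RIP (R : rcfType) (m N : nat) (eps : R) (S : 'cV[R]_N -> Prop)
  (A : 'M[R]_(m, N)) : Prop :=
  forall s, S s ->
    (1 - eps) * vnorm2 s <= vnorm2 (A *m s) <= (1 + eps) * vnorm2 s.

Definition mindex (d : nat) (p : 'I_d -> nat) : finType :=
  {dffun forall j : 'I_d, 'I_(p j)}.

Definition tensor (R : rcfType) (d : nat) (p : 'I_d -> nat) : Type :=
  mindex p -> R.

Definition fnorm2 (R : rcfType) d (p : 'I_d -> nat) (X : tensor R p) : R :=
  \sum_(idx : mindex p) X idx ^+ 2.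

Definition fdot (R : rcfType) d (p : 'I_d -> nat) (X Y : tensor R p) : R :=
  \sum_(idx : mindex p) X idx * Y idx.

Definition outer (R : rcfType) d (p : 'I_d -> nat)
  (v : forall j : 'I_d, 'cV[R]_(p j)) : tensor R p :=
  fun idx => \prod_(j < d) v j (idx j) 0.

Definition upd_dim d (p : 'I_d -> nat) (i0 : 'I_d) (m : nat) (j : 'I_d) : nat :=
  if j == i0 then m else p j.

Lemma upd_dim_neq d (p : 'I_d -> nat) i0 m j : j <> i0 -> upd_dim p i0 m j = p j.
Proof. by rewrite /upd_dim; case: eqP. Qed.

Lemma upd_dim_eq d (p : 'I_d -> nat) i0 m : upd_dim p i0 m i0 = m.
Proof. by rewrite /upd_dim eqxx. Qed.

Definition subst_idx d (p : 'I_d -> nat) i0 m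
  (idx : mindex (upd_dim p i0 m)) (k : 'I_(p i0)) : mindex p :=
  @finfun _ (fun j : 'I_d => 'I_(p j)) (fun j : 'I_d =>
    match j =P i0 with
    | ReflectT e => cast_ord (congr1 p (esym e)) k
    | ReflectF ne => cast_ord (upd_dim_neq p m ne) (idx j)
    end).

Definition modeprod (R : rcfType) d (p : 'I_d -> nat) (i0 : 'I_d) (m : nat)
  (U : 'M[R]_(m, p i0)) (X : tensor R p) : tensor R (upd_dim p i0 m) :=
  fun idx => \sum_(k < p i0)
    X (subst_idx idx k) * U (cast_ord (upd_dim_eq p i0 m) (idx i0)) k.

From HB Require Import structures.
From mathcomp Require Import all_boot all_order all_algebra.
From mathcomp Require Import ring lra.
Set Implicit Arguments. Unset Strict Implicit. Unset Printing Implicit Defensive.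
Import Order.TTheory GRing.Theory Num.Theory.
Local Open Scope ring_scope.

(* Inner products and the mode-i0 product both factor over rank-one tensors:
   with a_k = v^{i0}_k and c_kl = prod_{j <> i0} <v^j_k, v^j_l>, one gets
   <V_k, V_l> = <a_k, a_l> c_kl and <L V_k, L V_l> = <A a_k, A a_l> c_kl.
   Unit factors give c_kk = 1 and |c_kl| <= 1, so orthonormality makes the a_k
   unit vectors and, for k <> l, forces c_kl = 0 or a_k orthogonal to a_l.  In
   the latter case RIP on the S_2 vectors (a_k +- a_l)/sqrt 2 bounds
   |<A a_k, A a_l>| by eps/2, while RIP on S_1 bounds |‖A a_k‖^2 - 1| by eps/2.
   So the Gram matrix of the L V_k is eps/2-close to the identity, and expanding
   ‖L (V_k +- V_l)‖^2 gives the claim. *)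

Lemma sum_dffun_prod (R : comPzSemiRingType) (I : finType) (T_ : I -> finType)
    (P : forall i, T_ i -> R) :
  \sum_(t : {dffun forall i, T_ i}) \prod_i P i (t i) =
  \prod_i \sum_(j : T_ i) P i j.
Proof.
rewrite (reindex (@dffun_of_fprod I T_)); last exact/onW_bij/dffun_of_fprod_bij.
pose Q i := [ffun j => P i j].
transitivity (\sum_(t : fprod T_) \prod_(i in I) Q i (t i)).
  by apply: eq_bigr => t _; apply: eq_bigr => i _; rewrite !ffunE.
transitivity (\prod_i \sum_(j : T_ i) Q i j); last first.
  by apply: eq_bigr => i _; apply: eq_bigr => j _; rewrite ffunE.
rewrite big_fprod.
under [RHS]eq_bigr => i _ do rewrite (big_tag Q).
by rewrite bigA_distr_big_dep.
Qed.

Lemma sum_sqrrD (R : comPzRingType) (T : finType) (f g : T -> R) :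
  \sum_i (f i + g i) ^+ 2 =
  \sum_i f i ^+ 2 + \sum_i g i ^+ 2 + 2 * \sum_i f i * g i.
Proof.
by rewrite mulr_sumr -!big_split /=; apply: eq_bigr => i _; rewrite sqrrD; ring.
Qed.

Lemma sum_sqrrB (R : comPzRingType) (T : finType) (f g : T -> R) :
  \sum_i (f i - g i) ^+ 2 =
  \sum_i f i ^+ 2 + \sum_i g i ^+ 2 - 2 * \sum_i f i * g i.
Proof.
by rewrite mulr_sumr -big_split -sumrB /=; apply: eq_bigr => i _; rewrite sqrrB; ring.
Qed.

Section Vectors.
Variable R : rcfType.

Lemma vget_ord N (x : 'cV[R]_N) (i : 'I_N) : vget x i = x i 0.
Proof. by rewrite /vget valK. Qed.

Lemma vdotE N (x y : 'cV[R]_N) : vdot x y = \sum_(i < N) vget x i * vget y i.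
Proof. by apply: eq_bigr => i _; rewrite !vget_ord. Qed.

Lemma vnorm2_vdot N (x : 'cV[R]_N) : vnorm2 x = vdot x x.
Proof. by apply: eq_bigr => i _; rewrite expr2. Qed.

Lemma vnorm2_ge0 N (x : 'cV[R]_N) : 0 <= vnorm2 x.
Proof. by apply: sumr_ge0 => i _; rewrite sqr_ge0. Qed.

Lemma vnorm2D N (x y : 'cV[R]_N) :
  vnorm2 (x + y) = vnorm2 x + vnorm2 y + 2 * vdot x y.
Proof. by rewrite /vnorm2 -sum_sqrrD; apply: eq_bigr => i _; rewrite mxE. Qed.

Lemma vnorm2B N (x y : 'cV[R]_N) :
  vnorm2 (x - y) = vnorm2 x + vnorm2 y - 2 * vdot x y.
Proof. by rewrite /vnorm2 -sum_sqrrB; apply: eq_bigr => i _; rewrite !mxE. Qed.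

Lemma vnorm2N N (x : 'cV[R]_N) : vnorm2 (- x) = vnorm2 x.
Proof. by apply: eq_bigr => i _; rewrite mxE sqrrN. Qed.

Lemma vnorm2Z N (c : R) (x : 'cV[R]_N) : vnorm2 (c *: x) = c ^+ 2 * vnorm2 x.
Proof. by rewrite /vnorm2 mulr_sumr; apply: eq_bigr => i _; rewrite mxE exprMn. Qed.

Lemma vdotNr N (x y : 'cV[R]_N) : vdot x (- y) = - vdot x y.
Proof. by rewrite /vdot -sumrN; apply: eq_bigr => i _; rewrite mxE mulrN. Qed.

Lemma vdot_castmx N N' (e : N = N') (x y : 'cV[R]_N) :
  vdot (castmx (e, erefl 1%N) x) (castmx (e, erefl 1%N) y) = vdot x y.
Proof. by case: N' / e; rewrite !castmx_id. Qed.

Lemma mulmx_castmx m N N' (e : N = N') (A : 'M[R]_(m, N')) (x : 'cV[R]_N) :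
  castmx (erefl m, esym e) A *m x = A *m castmx (e, erefl 1%N) x.
Proof. by case: N' / e A => A; rewrite !castmx_id. Qed.

Lemma normr_vdot_le1 N (x y : 'cV[R]_N) :
  vnorm2 x = 1 -> vnorm2 y = 1 -> `|vdot x y| <= 1.
Proof.
move=> x1 y1; have := vnorm2_ge0 (x + y); have := vnorm2_ge0 (x - y).
rewrite (vnorm2B x y) vnorm2D x1 y1 ler_norml => ? ?; apply/andP; split; lra.
Qed.

Lemma S1N n kappa (x : 'cV[R]_(n ^ kappa)) : (0 < kappa)%N -> S1 x -> S1 (- x).
Proof.
move=> kappa_gt0 [u [u1 ->]]; pose i0 := Ordinal kappa_gt0.
exists (fun i => if i == i0 then - u i else u i); split.
  by move=> i; case: eqP => _; rewrite ?vnorm2N u1.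
apply/matrixP => t j; rewrite !mxE [RHS](bigD1 i0) //= [in LHS](bigD1 i0) //=.
have vgetN (z : 'cV[R]_n) s : vget (- z) s = - vget z s.
  by rewrite /vget; case: insub => [o|] /=; rewrite ?mxE ?oppr0.
by rewrite vgetN mulNr; congr (- (_ * _)); apply: eq_bigr => i /negbTE ->.
Qed.

End Vectors.

Section RIP.
Variables (R : rcfType) (n kappa m : nat) (A : 'M[R]_(m, n ^ kappa)) (delta : R).
Hypothesis A_RIP : RIP delta (@S12 R n kappa) A.

Lemma RIP_S1 x : S1 x -> vnorm2 x = 1 -> `|vnorm2 (A *m x) - 1| <= delta.
Proof.
move=> x_S1 x1; have /andP[] := A_RIP (or_introl x_S1).
by rewrite x1 !mulr1 ler_norml => ? ?; apply/andP; split; lra.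
Qed.

Lemma RIP_S2 x y : S1 x -> S1 y -> vnorm2 x = 1 -> vnorm2 y = 1 -> vdot x y = 0 ->
  `|vnorm2 (A *m (x + y)) - 2| <= 2 * delta.
Proof.
move=> x_S1 y_S1 x1 y1 xy0.
have xy2 : vnorm2 (x + y) = 2 by rewrite vnorm2D x1 y1 xy0 mulr0 addr0.
have /andP[] := A_RIP (or_intror (ex_intro _ x (ex_intro _ y (And4 x_S1 y_S1 xy0 erefl)))).
rewrite -scalemxAr !vnorm2Z xy2 exprVn sqr_sqrtr ?ler0n // ler_norml => ? ?.
apply/andP; split; lra.
Qed.

Lemma RIP_vdot_orth x y : (0 < kappa)%N ->
  S1 x -> S1 y -> vnorm2 x = 1 -> vnorm2 y = 1 -> vdot x y = 0 ->
  `|vdot (A *m x) (A *m y)| <= delta.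
Proof.
move=> kappa_gt0 x_S1 y_S1 x1 y1 xy0.
have := RIP_S2 x_S1 y_S1 x1 y1 xy0.
have Ny1 : vnorm2 (- y) = 1 by rewrite vnorm2N.
have xNy0 : vdot x (- y) = 0 by rewrite vdotNr xy0 oppr0.
have := RIP_S2 x_S1 (S1N kappa_gt0 y_S1) x1 Ny1 xNy0.
rewrite !mulmxDr mulmxN !vnorm2D vnorm2N vdotNr !ler_norml => /andP[? ?] /andP[? ?].
by apply/andP; split; lra.
Qed.

End RIP.

Section Tensors.
Variables (R : rcfType) (d : nat) (p : 'I_d -> nat).

Lemma fnorm2_fdot (X : tensor R p) : fnorm2 X = fdot X X.
Proof. by apply: eq_bigr => i _; rewrite expr2. Qed.

Lemma fnorm2D (X Y : tensor R p) :
  fnorm2 (fun i => X i + Y i) = fnorm2 X + fnorm2 Y + 2 * fdot X Y.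
Proof. exact: sum_sqrrD. Qed.

Lemma fnorm2B (X Y : tensor R p) :
  fnorm2 (fun i => X i - Y i) = fnorm2 X + fnorm2 Y - 2 * fdot X Y.
Proof. exact: sum_sqrrB. Qed.

Lemma fdot_outer (v w : forall j, 'cV[R]_(p j)) :
  fdot (outer v) (outer w) = \prod_j vdot (v j) (w j).
Proof.
rewrite /fdot /outer (eq_bigr (fun idx : mindex p => \prod_j (v j (idx j) 0 * w j (idx j) 0)))
  => [|idx _]; last by rewrite big_split.
exact: (sum_dffun_prod (fun j (i : 'I_(p j)) => v j i 0 * w j i 0)).
Qed.

End Tensors.

Section ModeProduct.
Variables (R : rcfType) (d : nat) (p : 'I_d -> nat) (i0 : 'I_d) (m : nat).

Lemma subst_idxE (idx : mindex (upd_dim p i0 m)) (k : 'I_(p i0)) j :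
  nat_of_ord (subst_idx idx k j) = if j == i0 then nat_of_ord k else nat_of_ord (idx j).
Proof. by rewrite /subst_idx ffunE; case: eqP. Qed.

Variable B : 'M[R]_(m, p i0).

Definition modeprod_factor (v : forall j, 'cV[R]_(p j)) (j : 'I_d) :
    'cV[R]_(upd_dim p i0 m j) :=
  \col_i (if j == i0 then vget (B *m v i0) i else vget (v j) i).

Lemma modeprod_outer v idx :
  modeprod B (outer v) idx = outer (modeprod_factor v) idx.
Proof.
rewrite /modeprod /outer (bigD1 i0) //= !mxE eqxx.
(* [cast_ord] keeps the value, so this exposes [idx i0] as a row index of [B]. *)
rewrite -[X in vget _ X]/(nat_of_ord (cast_ord (upd_dim_eq p i0 m) (idx i0))).
rewrite vget_ord mxE mulr_suml; apply: eq_bigr => k _.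
rewrite (bigD1 i0) //=; set rest := \prod_(j | _) _.
have -> : v i0 (subst_idx idx k i0) 0 = v i0 k 0.
  by congr (v i0 _ 0); apply: val_inj; rewrite /= subst_idxE eqxx.
have -> : rest = \prod_(j < d | j != i0) modeprod_factor v j (idx j) 0.
  apply: eq_bigr => j /negbTE j_i0.
  by rewrite mxE j_i0 -vget_ord subst_idxE j_i0.
by rewrite [LHS]mulrC mulrA.
Qed.

Lemma vdot_modeprod_factor v w j :
  vdot (modeprod_factor v j) (modeprod_factor w j) =
  if j == i0 then vdot (B *m v i0) (B *m w i0) else vdot (v j) (w j).
Proof.
rewrite vdotE; under eq_bigr do rewrite !vget_ord !mxE.
case: eqVneq => [->|/eqP j_i0]; first by rewrite upd_dim_eq vdotE.
by rewrite upd_dim_neq // vdotE.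
Qed.

Lemma fdot_modeprod_outer v w :
  fdot (modeprod B (outer v)) (modeprod B (outer w)) =
  vdot (B *m v i0) (B *m w i0) * \prod_(j | j != i0) vdot (v j) (w j).
Proof.
transitivity (fdot (outer (modeprod_factor v)) (outer (modeprod_factor w))).
  by apply: eq_bigr => idx _; rewrite !modeprod_outer.
rewrite fdot_outer (bigD1 i0) //= vdot_modeprod_factor eqxx; congr (_ * _).
by apply: eq_bigr => j /negbTE j_i0; rewrite vdot_modeprod_factor j_i0.
Qed.

Lemma fnorm2_modeprodD (X Y : tensor R p) :
  fnorm2 (modeprod B (fun i => X i + Y i)) = fnorm2 (modeprod B X) +
    fnorm2 (modeprod B Y) + 2 * fdot (modeprod B X) (modeprod B Y).
Proof.
rewrite -fnorm2D; apply: eq_bigr => idx _; congr (_ ^+ 2).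
by rewrite /modeprod -big_split; apply: eq_bigr => k _; rewrite mulrDl.
Qed.

Lemma fnorm2_modeprodB (X Y : tensor R p) :
  fnorm2 (modeprod B (fun i => X i - Y i)) = fnorm2 (modeprod B X) +
    fnorm2 (modeprod B Y) - 2 * fdot (modeprod B X) (modeprod B Y).
Proof.
rewrite -fnorm2B; apply: eq_bigr => idx _; congr (_ ^+ 2).
by rewrite /modeprod -sumrB; apply: eq_bigr => k _; rewrite mulrBl.
Qed.

Variables (K : nat) (X : 'I_K -> tensor R p) (eps : R).
Hypothesis X_orthonormal : forall k l, fdot (X k) (X l) = (k == l)%:R.
Hypothesis gram_close : forall k l,
  `|fdot (modeprod B (X k)) (modeprod B (X l)) - (k == l)%:R| <= eps / 2.

Lemma modeprod_near_isometry k :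
  (1 - eps) * fnorm2 (X k) <= fnorm2 (modeprod B (X k)) <= (1 + eps) * fnorm2 (X k).
Proof.
move: (gram_close k k); rewrite !fnorm2_fdot X_orthonormal eqxx mulr1n.
by rewrite ler_norml => /andP[? ?]; apply/andP; split; lra.
Qed.

Lemma modeprod_near_isometryD k l :
  (1 - eps) * fnorm2 (fun i => X k i + X l i)
    <= fnorm2 (modeprod B (fun i => X k i + X l i))
    <= (1 + eps) * fnorm2 (fun i => X k i + X l i).
Proof.
rewrite fnorm2_modeprodD fnorm2D !fnorm2_fdot !X_orthonormal.
move: (gram_close k k) (gram_close l l) (gram_close k l); rewrite !eqxx.
case: eqVneq => [<-|_]; rewrite ?mulr1n ?mulr0n !ler_norml;
  by move=> /andP[? ?] /andP[? ?] /andP[? ?]; apply/andP; split; lra.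
Qed.

Lemma modeprod_near_isometryB k l :
  (1 - eps) * fnorm2 (fun i => X k i - X l i)
    <= fnorm2 (modeprod B (fun i => X k i - X l i))
    <= (1 + eps) * fnorm2 (fun i => X k i - X l i).
Proof.
rewrite fnorm2_modeprodB fnorm2B !fnorm2_fdot !X_orthonormal.
move: (gram_close k k) (gram_close l l) (gram_close k l); rewrite !eqxx.
case: eqVneq => [<-|_]; rewrite ?mulr1n ?mulr0n !ler_norml;
  by move=> /andP[? ?] /andP[? ?] /andP[? ?]; apply/andP; split; lra.
Qed.

End ModeProduct.

Section RankOneSystem.
Variables (R : rcfType) (n kappa d : nat) (i0 : 'I_d) (p : 'I_d -> nat).
Hypotheses (kappa_gt0 : (0 < kappa)%N) (hp : p i0 = (n ^ kappa)%N).
Variables (K m : nat) (v : 'I_K -> forall j, 'cV[R]_(p j)).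
Variables (A : 'M[R]_(m, n ^ kappa)) (eps : R).
Hypothesis v_unit : forall k j, vnorm2 (v k j) = 1.
Hypothesis v_orthonormal : forall k l, fdot (outer (v k)) (outer (v l)) = (k == l)%:R.
Hypothesis A_RIP : RIP (eps / 2) (@S12 R n kappa) A.
Hypothesis v_S1 : forall k, S1 (castmx (hp, erefl 1%N) (v k i0)).

Let a k := castmx (hp, erefl 1%N) (v k i0).
Let c k l := \prod_(j | j != i0) vdot (v k j) (v l j).

Lemma rank_one_gram_close k l :
  `|fdot (modeprod (castmx (erefl m, esym hp) A) (outer (v k)))
         (modeprod (castmx (erefl m, esym hp) A) (outer (v l))) - (k == l)%:R|
    <= eps / 2.
Proof.
have fdot_v k' l' : fdot (outer (v k')) (outer (v l')) = vdot (a k') (a l') * c k' l'.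
  by rewrite fdot_outer (bigD1 i0) //= vdot_castmx.
have c_diag k' : c k' k' = 1 by apply: big1 => j _; rewrite -vnorm2_vdot v_unit.
have a_unit k' : vnorm2 (a k') = 1.
  by have := v_orthonormal k' k'; rewrite fdot_v c_diag eqxx mulr1 -vnorm2_vdot.
have A_a_close k' := RIP_S1 A_RIP (v_S1 k') (a_unit k').
have c_le1 : `|c k l| <= 1.
  by rewrite normr_prod; apply: prodr_ile1 => j _; rewrite normr_ge0 normr_vdot_le1.
have := v_orthonormal k l.
rewrite fdot_v fdot_modeprod_outer !mulmx_castmx -/(c k l) -/(a k) -/(a l).
case: eqVneq => [<- _|_ /eqP].
  by rewrite c_diag !mulr1 mulr1n -vnorm2_vdot; exact: A_a_close.
rewrite mulr0n subr0 mulf_eq0 => /orP[/eqP a_orth|/eqP ->].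
  rewrite normrM -[eps / 2]mulr1 ler_pM ?normr_ge0 //.
  exact: (RIP_vdot_orth A_RIP kappa_gt0 (v_S1 k) (v_S1 l) (a_unit k) (a_unit l) a_orth).
by rewrite mulr0 normr0 (le_trans (normr_ge0 _) (A_a_close k)).
Qed.

End RankOneSystem.

Unset Implicit Arguments.

Theorem lemma4 (R : rcfType) (n kappa d : nat) (i0 : 'I_d) (p : 'I_d -> nat)
  (hn : (0 < n)%N) (hkappa : (0 < kappa)%N) (hd : (0 < d)%N)
  (hp : p i0 = (n ^ kappa)%N)
  (K m : nat) (v : 'I_K -> forall j : 'I_d, 'cV[R]_(p j))
  (A : 'M[R]_(m, n ^ kappa)) (eps : R) :
  (forall k j, vnorm2 (v k j) = 1) ->
  (forall k l, fdot (outer (v k)) (outer (v l)) = (k == l)%:R) ->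
  RIP (eps / 2) (@S12 R n kappa) A ->
  (forall k, S1 (castmx (hp, erefl 1%N) (v k i0))) ->
  let L := modeprod (castmx (erefl m, esym hp) A) in
  (forall k,
     (1 - eps) * fnorm2 (outer (v k)) <= fnorm2 (L (outer (v k)))
     <= (1 + eps) * fnorm2 (outer (v k))) /\
  (forall k l,
     (1 - eps) * fnorm2 (fun idx => outer (v k) idx + outer (v l) idx)
       <= fnorm2 (L (fun idx => outer (v k) idx + outer (v l) idx))
       <= (1 + eps) * fnorm2 (fun idx => outer (v k) idx + outer (v l) idx)) /\
  (forall k l,
     (1 - eps) * fnorm2 (fun idx => outer (v k) idx - outer (v l) idx)
       <= fnorm2 (L (fun idx => outer (v k) idx - outer (v l) idx))
       <= (1 + eps) * fnorm2 (fun idx => outer (v k) idx - outer (v l) idx)).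
Proof.
move=> v_unit v_orthonormal A_RIP v_S1 L.
have gram := rank_one_gram_close hkappa v_unit v_orthonormal A_RIP v_S1.
split; [|split].
- exact: modeprod_near_isometry v_orthonormal gram.
- exact: modeprod_near_isometryD v_orthonormal gram.
- exact: modeprod_near_isometryB v_orthonormal gram.
Qed.
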